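(* In the $(3,2,2)$ scenario, the deterministic correlation $p(\vec x|\vec a)=\delta_{x_1,a_2\oplus a_3}\,\delta_{x_2,a_3\oplus a_1}\,\delta_{x_3,a_1\oplus a_2}$ cannot be realized by a process function; hence it is antinomic (not deterministically consistent), although its signalling graph is the complete directed graph on three vertices.
   Context: $(3,2,2)$ scenario: three parties with $a_k,x_k\in\{0,1\}$; $\oplus$ is addition mod 2. For finite sets $I_k,O_k$, $p(\vec i|\vec o)$ is a classical process if for all finite $A_k,X_k$ and all local interventions $p(x_k,o_k|a_k,i_k)$ the expression $\sum_{\vec i,\vec o}\prod_kp(x_k,o_k|a_k,i_k)p(\vec i|\vec o)$ is a valid conditional distribution over $\vec x$. A process function is $\omega:\vec O\to\vec I$ such that $\delta_{\vec i,\omega(\vec o)}$ is a classical process, equivalently such that for all $h=(h_k:I_k\to O_k)_k$ the map $\omega\circ h$ has a unique fixed point. A correlation is realized by $\omega$ if it equals $\sum_{\vec i,\vec o}\prod_kp(x_k,o_k|a_k,i_k)\delta_{\vec i,\omega(\vec o)}$ for some local interventions; it is deterministically consistent if it is of this form with $\delta_{\vec i,\omega(\vec o)}$ replaced by a convex combination of process functions, and antinomic otherwise. Signalling graph: edge $k\to l$ iff $f_l$ depends nontrivially on $a_k$. *)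

From HB Require Import structures.
From mathcomp Require Import all_boot all_order all_algebra.
From mathcomp Require Import reals.
Set Implicit Arguments. Unset Strict Implicit. Unset Printing Implicit Defensive.
Import Order.TTheory GRing.Theory Num.Theory.
Local Open Scope ring_scope.

Notation triple A B C := ((A * B) * C)%type.

(* A (3,2,2) correlation p(x|a), x, a in {0,1}^3, written p x a. *)
Definition corr (R : realType) := triple bool bool bool -> triple bool bool bool -> R.

Definition comp (v : triple bool bool bool) (k : 'I_3) : bool :=
  match val k with 0%N => v.1.1 | 1%N => v.1.2 | _ => v.2 end.

(* Local intervention p(x_k, o_k | a_k, i_k) with A_k = X_k = {0,1},
   written p a i x o : a conditional probability distribution. *)
Definition intervention (R : realType) (I O : finType)
  (p : bool -> I -> bool -> O -> R) : Prop :=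
  (forall a i x o, 0 <= p a i x o) /\
  (forall a i, \sum_(x : bool) \sum_(o : O) p a i x o = 1).

Definition process_function (I1 I2 I3 O1 O2 O3 : finType)
  (w : triple O1 O2 O3 -> triple I1 I2 I3) : Prop :=
  forall (h1 : I1 -> O1) (h2 : I2 -> O2) (h3 : I3 -> O3),
    exists! i : triple I1 I2 I3, w ((h1 i.1.1, h2 i.1.2), h3 i.2) = i.

(* p is obtained from the "process" q(i|o) (written q o i) by local interventions. *)
Definition realizes_with (R : realType) (I1 I2 I3 O1 O2 O3 : finType)
  (q : triple O1 O2 O3 -> triple I1 I2 I3 -> R) (p : corr R) : Prop :=
  exists (p1 : bool -> I1 -> bool -> O1 -> R) (p2 : bool -> I2 -> bool -> O2 -> R)
         (p3 : bool -> I3 -> bool -> O3 -> R),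
    [/\ intervention p1, intervention p2, intervention p3 &
      forall x a : triple bool bool bool,
        p x a = \sum_(i : triple I1 I2 I3) \sum_(o : triple O1 O2 O3)
                  p1 a.1.1 i.1.1 x.1.1 o.1.1 * p2 a.1.2 i.1.2 x.1.2 o.1.2
                  * p3 a.2 i.2 x.2 o.2 * q o i].

Definition realized_by (R : realType) (I1 I2 I3 O1 O2 O3 : finType)
  (w : triple O1 O2 O3 -> triple I1 I2 I3) (p : corr R) : Prop :=
  realizes_with (fun o i => (i == w o)%:R) p.

Definition det_consistent (R : realType) (p : corr R) : Prop :=
  exists (I1 I2 I3 O1 O2 O3 : finType) (n : nat) (lam : 'I_n -> R)
         (ws : 'I_n -> triple O1 O2 O3 -> triple I1 I2 I3),
    [/\ forall j, 0 <= lam j, \sum_(j < n) lam j = 1,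
        forall j, process_function (ws j) &
        realizes_with (fun o i => \sum_(j < n) lam j * (i == ws j o)%:R) p].

Definition antinomic (R : realType) (p : corr R) : Prop := ~ det_consistent p.

Definition det_corr (R : realType) (f : triple bool bool bool -> triple bool bool bool)
  : corr R := fun x a => (x == f a)%:R.

Definition signal_edge (f : triple bool bool bool -> triple bool bool bool)
  (k l : 'I_3) : Prop :=
  exists a a' : triple bool bool bool,
    (forall j, j != k -> comp a j = comp a' j) /\ comp (f a) l != comp (f a') l.

Definition f_xor (a : triple bool bool bool) : triple bool bool bool :=
  ((a.1.2 (+) a.2, a.2 (+) a.1.1), a.1.1 (+) a.1.2).

From Pilot Require Import Defs.
From mathcomp Require Import all_boot all_order all_algebra reals.
Set Implicit Arguments. Unset Strict Implicit. Unset Printing Implicit Defensive.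
Import Order.TTheory GRing.Theory Num.Theory.

(* Fix a process function w for three parties and freeze the
   local operation h3 of party 3.  What remains is a bipartite process
   between parties 1 and 2 which, like every bipartite process function,
   admits no self-signalling and no two-way signalling: the input of party 1
   may depend on the output of party 2 or conversely, never both.
   On the other hand, a deterministic realization of
   x1 = a2 + a3, x2 = a3 + a1, x3 = a1 + a2 with a3 = 0 makes party 1 read
   a2 and party 2 read a1 off their inputs, i.e. signalling in both
   directions.  Convex mixtures of process functions reduce to this
   deterministic situation: pick a component of positive weight and, for
   every setting and input, an outcome/output pair of positive probability;
   positivity forces these choices to reproduce the deterministic
   correlation at every fixed point. *)

Section FrozenThirdParty.
Variables I1 I2 I3 O1 O2 O3 : finType.
Variable w : triple O1 O2 O3 -> triple I1 I2 I3.
Hypothesis w_process : process_function w.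
Variable h3 : I3 -> O3.

Definition is_fp (h1 : I1 -> O1) (h2 : I2 -> O2) (i : triple I1 I2 I3) : bool :=
  w ((h1 i.1.1, h2 i.1.2), h3 i.2) == i.

Lemma fp_exists (h1 : I1 -> O1) (h2 : I2 -> O2) : exists i, is_fp h1 h2 i.
Proof. by have [i [/eqP Hi _]] := w_process h1 h2 h3; exists i. Qed.

Definition fp_const (o1 : O1) (o2 : O2) : triple I1 I2 I3 :=
  xchoose (fp_exists (fun _ => o1) (fun _ => o2)).

Lemma fp_constP o1 o2 : is_fp (fun _ => o1) (fun _ => o2) (fp_const o1 o2).
Proof. exact: xchooseP (fp_exists (fun _ => o1) (fun _ => o2)). Qed.

Lemma fp_constE (h1 : I1 -> O1) (h2 : I2 -> O2) i :
  is_fp h1 h2 i -> i = fp_const (h1 i.1.1) (h2 i.1.2).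
Proof.
move=> /eqP Hi; have [k [_ uniq_fp]] := w_process (fun _ => h1 i.1.1) (fun _ => h2 i.1.2) h3.
exact: etrans (esym (uniq_fp i Hi)) (uniq_fp _ (eqP (fp_constP _ _))).
Qed.

(* No self-signalling: the input of party 1 does not depend on its output.
   Otherwise the operation "output o1' on that input, o1 elsewhere" has no
   fixed point. *)
Lemma no_self_signalling1 o1 o1' o2 : (fp_const o1 o2).1.1 = (fp_const o1' o2).1.1.
Proof.
have [//|Hne] := eqVneq (fp_const o1 o2).1.1 (fp_const o1' o2).1.1; exfalso.
pose h1 i1 := if i1 == (fp_const o1 o2).1.1 then o1' else o1.
have [i Hi] := fp_exists h1 (fun _ => o2).
move: (fp_constE Hi); rewrite /h1; case: eqP => [E|NE] Ei.
  by move: Hne; rewrite -E Ei eqxx.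
by apply: NE; rewrite Ei.
Qed.

Lemma no_self_signalling2 o1 o2 o2' : (fp_const o1 o2).1.2 = (fp_const o1 o2').1.2.
Proof.
have [//|Hne] := eqVneq (fp_const o1 o2).1.2 (fp_const o1 o2').1.2; exfalso.
pose h2 i2 := if i2 == (fp_const o1 o2).1.2 then o2' else o2.
have [i Hi] := fp_exists (fun _ => o1) h2.
move: (fp_constE Hi); rewrite /h2; case: eqP => [E|NE] Ei.
  by move: Hne; rewrite -E Ei eqxx.
by apply: NE; rewrite Ei.
Qed.

(* No two-way signalling: if party 2 signals to party 1 (for fixed o1) and
   party 1 signals to party 2 (for fixed o2), the operations that "flip" the
   outputs on the distinguished inputs have no fixed point. *)
Lemma no_two_way_signalling_at o1 o1' o2 o2' :
  (fp_const o1 o2).1.1 != (fp_const o1 o2').1.1 ->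
  (fp_const o1 o2).1.2 != (fp_const o1' o2).1.2 -> False.
Proof.
move=> sig21 sig12.
pose h1 i1 := if i1 == (fp_const o1 o2).1.1 then o1' else o1.
pose h2 i2 := if i2 == (fp_const o1' o2).1.2 then o2' else o2.
have [i Hi] := fp_exists h1 h2.
have Ei := fp_constE Hi.
have in1 : i.1.1 = (fp_const o1 (h2 i.1.2)).1.1.
  by rewrite {1}Ei (no_self_signalling1 _ o1).
have in2 : i.1.2 = (fp_const (h1 i.1.1) o2).1.2.
  by rewrite {1}Ei (no_self_signalling2 _ _ o2).
move: in1 in2; rewrite /h1 /h2.
case: (eqVneq i.1.1 (fp_const o1 o2).1.1) => [A in1 in2 | A in1 in2].
  by move: sig21; rewrite -A in1 in2 eqxx eqxx.
by move: A; rewrite in1 in2 (negbTE sig12) eqxx.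
Qed.

Lemma one_way_signalling p p' q q' r r' s s' :
  (fp_const p q).1.1 != (fp_const p' q').1.1 ->
  (fp_const r s).1.2 = (fp_const r' s').1.2.
Proof.
move=> sig21; have [//|sig12] := eqVneq (fp_const r s).1.2 (fp_const r' s').1.2.
exfalso; move: sig21 sig12; rewrite (no_self_signalling1 p r) (no_self_signalling1 p' r).
rewrite (no_self_signalling2 r s q) (no_self_signalling2 r' s' q).
exact: no_two_way_signalling_at.
Qed.

(* Deterministic local operations g_k a i = (recorded outcome, output).
   They cannot make party 1 record a2 and party 2 record a1 at every fixed
   point: the first requires signalling 2 -> 1, the second 1 -> 2. *)
Lemma no_mutual_reading (g1 : bool -> I1 -> bool * O1) (g2 : bool -> I2 -> bool * O2) :
  ~ (forall a1 a2 i, is_fp (fun i1 => (g1 a1 i1).2) (fun i2 => (g2 a2 i2).2) i ->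
       (g1 a1 i.1.1).1 = a2 /\ (g2 a2 i.1.2).1 = a1).
Proof.
move=> reads.
have [i00 H00] := fp_exists (fun i1 => (g1 false i1).2) (fun i2 => (g2 false i2).2).
have [i01 H01] := fp_exists (fun i1 => (g1 false i1).2) (fun i2 => (g2 true i2).2).
have [i10 H10] := fp_exists (fun i1 => (g1 true i1).2) (fun i2 => (g2 false i2).2).
have [r00 s00] := reads _ _ _ H00.
have [r01 _] := reads _ _ _ H01.
have [_ s10] := reads _ _ _ H10.
have sig21 : i00.1.1 != i01.1.1 by apply/eqP => E; move: r00; rewrite E r01.
have sig12 : i00.1.2 != i10.1.2 by apply/eqP => E; move: s00; rewrite E s10.
move: sig21 sig12; rewrite (fp_constE H00) (fp_constE H01) (fp_constE H10) /=.
by move=> sig21 /eqP; apply; apply: one_way_signalling sig21.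
Qed.

End FrozenThirdParty.

Local Open Scope ring_scope.

Section DeterministicSupport.
Variable R : realType.

Lemma psum_pos_witness (T : finType) (F : T -> R) :
  (forall t, 0 <= F t) -> \sum_t F t != 0 -> exists t, 0 < F t.
Proof.
move=> F_ge0; rewrite psumr_neq0 // => /hasP[t _ Ft]; by exists t.
Qed.

Lemma intervention_support (I O : finType) (p : bool -> I -> bool -> O -> R) a i :
  intervention p -> exists xo : bool * O, 0 < p a i xo.1 xo.2.
Proof.
move=> [p_ge0 p_sum1]; apply: psum_pos_witness => [[x o]|]; first exact: p_ge0.
by rewrite -(pair_big xpredT xpredT (p a i)) /= p_sum1 oner_eq0.
Qed.

Lemma realization_support (I1 I2 I3 O1 O2 O3 : finType)
    (q : triple O1 O2 O3 -> triple I1 I2 I3 -> R)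
    (f : triple bool bool bool -> triple bool bool bool)
    (p1 : bool -> I1 -> bool -> O1 -> R) (p2 : bool -> I2 -> bool -> O2 -> R)
    (p3 : bool -> I3 -> bool -> O3 -> R) a x i o :
  (forall o i, 0 <= q o i) -> intervention p1 -> intervention p2 -> intervention p3 ->
  (forall x a, det_corr R f x a = \sum_(i : triple I1 I2 I3) \sum_(o : triple O1 O2 O3)
     p1 a.1.1 i.1.1 x.1.1 o.1.1 * p2 a.1.2 i.1.2 x.1.2 o.1.2 * p3 a.2 i.2 x.2 o.2 * q o i) ->
  0 < p1 a.1.1 i.1.1 x.1.1 o.1.1 -> 0 < p2 a.1.2 i.1.2 x.1.2 o.1.2 ->
  0 < p3 a.2 i.2 x.2 o.2 -> 0 < q o i -> x = f a.
Proof.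
move=> q_ge0 [p1_ge0 _] [p2_ge0 _] [p3_ge0 _] realizes P1 P2 P3 Q.
have [//|x_neq] := eqVneq x (f a); exfalso.
pose term i o := p1 a.1.1 i.1.1 x.1.1 o.1.1 * p2 a.1.2 i.1.2 x.1.2 o.1.2
                 * p3 a.2 i.2 x.2 o.2 * q o i.
have term_ge0 i' o' : 0 <= term i' o' by rewrite !mulr_ge0.
have sum0 : \sum_i' \sum_o' term i' o' = 0.
  by rewrite -realizes /det_corr (negbTE x_neq).
have row0 :=
  @psumr_eq0P _ _ _ _ (fun i' _ => sumr_ge0 _ (fun o' _ => term_ge0 i' o')) sum0 i isT.
have : term i o = 0 := @psumr_eq0P _ _ _ _ (fun o' _ => term_ge0 i o') row0 o isT.
by apply/eqP; rewrite gt_eqF // !mulr_gt0.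
Qed.

End DeterministicSupport.

Lemma det_consistent_support (R : realType) (f : triple bool bool bool -> triple bool bool bool) :
  det_consistent (det_corr R f) ->
  exists (I1 I2 I3 O1 O2 O3 : finType) (w : triple O1 O2 O3 -> triple I1 I2 I3)
         (g1 : bool -> I1 -> bool * O1) (g2 : bool -> I2 -> bool * O2)
         (g3 : bool -> I3 -> bool * O3),
    process_function w /\
    forall a i, w (((g1 a.1.1 i.1.1).2, (g2 a.1.2 i.1.2).2), (g3 a.2 i.2).2) = i ->
      f a = (((g1 a.1.1 i.1.1).1, (g2 a.1.2 i.1.2).1), (g3 a.2 i.2).1).
Proof.
move=> [I1 [I2 [I3 [O1 [O2 [O3 [n [lam [ws [lam_ge0 lam_sum1 ws_process]]]]]]]]]].
move=> [p1 [p2 [p3 [P1 P2 P3 realizes]]]].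
have [j lam_j] : exists j, 0 < lam j.
  by apply: psum_pos_witness => //; rewrite lam_sum1 oner_eq0.
pose q o i := \sum_(k < n) lam k * (i == ws k o)%:R.
have q_ge0 o i : 0 <= q o i by apply: sumr_ge0 => k _; rewrite mulr_ge0.
have q_pos o : 0 < q o (ws j o).
  rewrite /q (bigD1 j) //= eqxx mulr1 ltr_pwDl //.
  by apply: sumr_ge0 => k _; rewrite mulr_ge0.
pose g1 a i := xchoose (intervention_support a i P1).
pose g2 a i := xchoose (intervention_support a i P2).
pose g3 a i := xchoose (intervention_support a i P3).
exists I1, I2, I3, O1, O2, O3, (ws j), g1, g2, g3; split=> // a i fp_i.
symmetry; apply: (realization_support (q := q) (i := i)
  (o := (((g1 a.1.1 i.1.1).2, (g2 a.1.2 i.1.2).2), (g3 a.2 i.2).2)) q_ge0 P1 P2 P3 realizes).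
- exact: xchooseP (intervention_support _ _ P1).
- exact: xchooseP (intervention_support _ _ P2).
- exact: xchooseP (intervention_support _ _ P3).
- by rewrite -[X in q _ X]fp_i q_pos.
Qed.

Lemma realized_det_consistent (R : realType) (I1 I2 I3 O1 O2 O3 : finType)
    (w : triple O1 O2 O3 -> triple I1 I2 I3) (p : corr R) :
  process_function w -> realized_by w p -> det_consistent p.
Proof.
move=> w_process [p1 [p2 [p3 [P1 P2 P3 realizes]]]].
exists I1, I2, I3, O1, O2, O3, 1%N, (fun _ => 1), (fun _ => w).
split=> //; first by rewrite big_ord1.
exists p1, p2, p3; split=> // x a; rewrite realizes.
by apply: eq_bigr => i _; apply: eq_bigr => o _; rewrite big_ord1 mul1r.
Qed.

(* The xor correlation is antinomic: at a3 = 0 it makes party 1 record a2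
   and party 2 record a1, which no process function allows. *)
Lemma antinomic_xor (R : realType) : antinomic (det_corr R f_xor).
Proof.
move=> /det_consistent_support
  [I1 [I2 [I3 [O1 [O2 [O3 [w [g1 [g2 [g3 [w_process reproduces]]]]]]]]]]].
apply: (no_mutual_reading w_process (h3 := fun i3 => (g3 false i3).2)) => a1 a2 i /eqP fp_i.
by case: (reproduces ((a1, a2), false) i fp_i); rewrite /= addbF => <- <-.
Qed.

Lemma f_xor_local (a a' : triple bool bool bool) (l : 'I_3) :
  (forall j, j != l -> Defs.comp a j = Defs.comp a' j) ->
  Defs.comp (f_xor a) l = Defs.comp (f_xor a') l.
Proof.
move=> agree.
have {agree} agree_at m (Hm : (m < 3)%N) :
    Ordinal Hm != l -> Defs.comp a (Ordinal Hm) = Defs.comp a' (Ordinal Hm).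
  exact: agree.
case: l agree_at => [[|[|[|l]]] Hl] // agree_at.
- by move: (agree_at 1%N isT isT) (agree_at 2%N isT isT); rewrite /Defs.comp /= => -> ->.
- by move: (agree_at 0%N isT isT) (agree_at 2%N isT isT); rewrite /Defs.comp /= => -> ->.
- by move: (agree_at 0%N isT isT) (agree_at 1%N isT isT); rewrite /Defs.comp /= => -> ->.
Qed.

Definition basis_input (k : 'I_3) : triple bool bool bool :=
  ((val k == 0%N, val k == 1%N), val k == 2%N).

Lemma comp_basis_input (k j : 'I_3) : Defs.comp (basis_input k) j = (j == k).
Proof. by case: k j => [[|[|[|k]]] Hk] // [[|[|[|j]]] Hj]. Qed.

Lemma signal_xor (k l : 'I_3) : signal_edge f_xor k l <-> k != l.
Proof.
split.
  move=> [a [a' [agree differ]]]; apply/eqP => Ekl; subst l.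
  by move: differ; rewrite (f_xor_local agree) eqxx.
move=> Hkl; exists (basis_input k), ((false, false), false); split.
  by move=> j; rewrite comp_basis_input => /negbTE ->; case: j => [[|[|[|j]]] Hj].
by case: k l Hkl => [[|[|[|k]]] Hk] // [[|[|[|l]]] Hl].
Qed.

Theorem mainTheorem8 (R : realType) :
  (forall (I1 I2 I3 O1 O2 O3 : finType) (w : triple O1 O2 O3 -> triple I1 I2 I3),
     process_function w -> ~ realized_by w (det_corr R f_xor)) /\
  antinomic (det_corr R f_xor) /\
  (forall k l : 'I_3, signal_edge f_xor k l <-> k != l).
Proof.
split; last by split; [exact: antinomic_xor | exact: signal_xor].
move=> I1 I2 I3 O1 O2 O3 w w_process realized.
exact: antinomic_xor (realized_det_consistent w_process realized).
Qed.
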